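(* The logic $\mathsf{LCA}$ is sound and complete for the class of all models: for every $\varphi\in\mathcal{L}$, $\varphi$ is a theorem of $\mathsf{LCA}$ iff $\varphi$ is valid (true in every model $(S,U)$). Here $\mathsf{LCA}$ is the extension of classical propositional logic (over $\mathcal{L}$) by the following axioms and rules, for all $i\in\mathit{Agt}$, $\alpha\in\mathcal{L}_0$, $\varphi,\psi\in\mathcal{L}$, and $\circledcirc\in\{\mathcal{A}_i,\mathcal{R}_i,\mathcal{A}^{\mathsf{real}}_i,\mathcal{R}^{\mathsf{real}}_i\}$: (A1) $(\Box_i\varphi\wedge\Box_i(\varphi\to\psi))\to\Box_i\psi$; (A2) $(\circledcirc\varphi\wedge\circledcirc(\neg\varphi\wedge\psi))\to\circledcirc\psi$; (A3) $\triangle_i\alpha\to\Box_i\alpha$; (A4) $\triangle_i(\alpha\to\mathsf{rew}_i)\to\mathcal{A}_i\alpha$; (A5) $\triangle_i(\alpha\to\mathsf{pun}_i)\to\mathcal{R}_i\alpha$; (A6) $\mathcal{A}_i\varphi\to\mathcal{A}^{\mathsf{real}}_i\varphi$; (A7) $\mathcal{R}_i\varphi\to\mathcal{R}^{\mathsf{real}}_i\varphi$; (A8) $\Box_i\varphi\to\mathcal{A}^{\mathsf{real}}_i\neg\varphi$; (A9) $\Box_i\varphi\to\mathcal{R}^{\mathsf{real}}_i\neg\varphi$; (A10) $\mathcal{A}^{\mathsf{real}}_i\varphi\to\Box_i(\varphi\to\mathsf{rew}_i)$; (A11) $\mathcal{R}^{\mathsf{real}}_i\varphi\to\Box_i(\varphi\to\mathsf{pun}_i)$;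 (R1) from $\varphi$ infer $\Box_i\varphi$; (R2) from $\varphi$ infer $\circledcirc\neg\varphi$; (R3) from $\varphi\leftrightarrow\psi$ infer $\circledcirc\varphi\leftrightarrow\circledcirc\psi$.
   Context: Let $\mathit{Agt}=\{1,\dots,n\}$ be a finite set of agents and $\mathit{Atm}$ a countably infinite set of atoms containing, for each $i\in\mathit{Agt}$, special atoms $\mathsf{rew}_i$ and $\mathsf{pun}_i$. The language $\mathcal{L}_0$ is given by $\alpha::=p\mid\neg\alpha\mid\alpha\wedge\alpha\mid \triangle_i\alpha$ ($p\in\mathit{Atm}$, $i\in\mathit{Agt}$); $\to,\vee,\leftrightarrow,\top,\bot$ are the usual abbreviations. A state is a tuple $S=((B_i)_{i\in\mathit{Agt}},V)$ with $B_i\subseteq\mathcal{L}_0$ and $V\subseteq\mathit{Atm}$; $\mathbf{S}$ is the set of all states. Truth of $\mathcal{L}_0$-formulas: $S\models p$ iff $p\in V$; Boolean clauses as usual; $S\models\triangle_i\alpha$ iff $\alpha\in B_i$. Define $\mathit{Des}_i(S)=\{\alpha\in\mathcal{L}_0:(\alpha\to\mathsf{rew}_i)\in B_i\}$ and $\mathit{Und}_i(S)=\{\alpha\in\mathcal{L}_0:(\alpha\to\mathsf{pun}_i)\in B_i\}$. Relations on $\mathbf{S}$: $S\,\mathcal{E}_i\,S'$ iff $S'\models\alpha$ for all $\alpha\in B_i$; $S\,\mathcal{A}_i\,S'$ iff $S'\models\alpha$ for some $\alpha\in\mathit{Des}_i(S)$; $S\,\mathcal{R}_i\,S'$ iff $S'\models\alpha$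 for some $\alpha\in\mathit{Und}_i(S)$. A model is a pair $(S,U)$ with $S\in U\subseteq\mathbf{S}$. The language $\mathcal{L}$ is $\varphi::=\alpha\mid\neg\varphi\mid\varphi\wedge\varphi\mid\Box_i\varphi\mid\mathcal{A}_i\varphi\mid\mathcal{R}_i\varphi\mid\mathcal{A}^{\mathsf{real}}_i\varphi\mid\mathcal{R}^{\mathsf{real}}_i\varphi$ with $\alpha\in\mathcal{L}_0$. Semantics: $(S,U)\models\alpha$ iff $S\models\alpha$; Boolean clauses as usual; $(S,U)\models\Box_i\varphi$ iff for all $S'\in U$ with $S\mathcal{E}_iS'$, $(S',U)\models\varphi$; $(S,U)\models\mathcal{A}_i\varphi$ iff for all $S'\in U$ with $(S',U)\models\varphi$, $S\mathcal{A}_iS'$; $(S,U)\models\mathcal{R}_i\varphi$ iff for all $S'\in U$ with $(S',U)\models\varphi$, $S\mathcal{R}_iS'$; $(S,U)\models\mathcal{A}^{\mathsf{real}}_i\varphi$ iff for all $S'\in U$ with $(S',U)\models\varphi$ and $S\mathcal{E}_iS'$, $S\mathcal{A}_iS'$; $(S,U)\models\mathcal{R}^{\mathsf{real}}_i\varphi$ iff for all $S'\in U$ with $(S',U)\models\varphi$ and $S\mathcal{E}_iS'$, $S\mathcal{R}_iS'$. *)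

From mathcomp Require Import all_boot.
Set Implicit Arguments.
Unset Strict Implicit.
Unset Printing Implicit Defensive.

Section LCA.
Variable n : nat.
Definition agent := 'I_n.

Inductive atom : Type :=
| AP of nat
| ARew of agent
| APun of agent.

Inductive form0 : Type :=
| At0 of atom
| Neg0 of form0
| And0 of form0 & form0
| Tri0 of agent & form0.

Definition Imp0 (a b : form0) : form0 := Neg0 (And0 a (Neg0 b)).

Inductive mop : Type := OA | OR | OAreal | ORreal.

(* L.  Its alpha-case is unfolded: L0 formulas are generated inside L by
   atoms, negation, conjunction and triangle_i (whose argument is in L0). *)
Inductive form : Type :=
| At of atom
| Neg of form
| And of form & form
| Tri of agent & form0
| Box of agent & form
| Mod of mop & agent & form.

Fixpoint emb (a : form0) : form :=
  match a with
  | At0 p => At p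
  | Neg0 b => Neg (emb b)
  | And0 b c => And (emb b) (emb c)
  | Tri0 i b => Tri i b
  end.

Definition Imp (a b : form) : form := Neg (And a (Neg b)).
Definition Iff (a b : form) : form := And (Imp a b) (Imp b a).

Record state : Type := State {
  Bel : agent -> form0 -> Prop;
  Val : atom -> Prop
}.

Fixpoint sat0 (S : state) (a : form0) : Prop :=
  match a with
  | At0 p => Val S p
  | Neg0 b => ~ sat0 S b
  | And0 b c => sat0 S b /\ sat0 S c
  | Tri0 i b => Bel S i b
  end.

Definition Des (i : agent) (S : state) (a : form0) : Prop :=
  Bel S i (Imp0 a (At0 (ARew i))).
Definition Und (i : agent) (S : state) (a : form0) : Prop :=
  Bel S i (Imp0 a (At0 (APun i))).

Definition relE (i : agent) (S S' : state) : Prop :=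
  forall a, Bel S i a -> sat0 S' a.
Definition relA (i : agent) (S S' : state) : Prop :=
  exists a, Des i S a /\ sat0 S' a.
Definition relR (i : agent) (S S' : state) : Prop :=
  exists a, Und i S a /\ sat0 S' a.

Fixpoint sat (U : state -> Prop) (S : state) (f : form) : Prop :=
  match f with
  | At p => Val S p
  | Neg g => ~ sat U S g
  | And g h => sat U S g /\ sat U S h
  | Tri i b => Bel S i b
  | Box i g => forall S', U S' -> relE i S S' -> sat U S' g
  | Mod OA i g => forall S', U S' -> sat U S' g -> relA i S S'
  | Mod OR i g => forall S', U S' -> sat U S' g -> relR i S S'
  | Mod OAreal i g =>
      forall S', U S' -> sat U S' g -> relE i S S' -> relA i S S'
  | Mod ORreal i g =>
      forall S', U S' -> sat U S' g -> relE i S S' -> relR i S S'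
  end.

Definition valid (f : form) : Prop :=
  forall (U : state -> Prop) (S : state), U S -> sat U S f.

(* Classical propositional tautologies over L: formulas whose head is not
   Neg/And are treated as propositional atoms. *)
Fixpoint peval (v : form -> bool) (f : form) : bool :=
  match f with
  | Neg g => ~~ peval v g
  | And g h => peval v g && peval v h
  | _ => v f
  end.

Definition tautology (f : form) : Prop := forall v, peval v f = true.

Definition rew (i : agent) : form := At (ARew i).
Definition pun (i : agent) : form := At (APun i).

Inductive LCA : form -> Prop :=
| LCA_taut f : tautology f -> LCA f
| LCA_MP f g : LCA f -> LCA (Imp f g) -> LCA g
| LCA_A1 i f g : LCA (Imp (And (Box i f) (Box i (Imp f g))) (Box i g))
| LCA_A2 o i f g :
    LCA (Imp (And (Mod o i f) (Mod o i (And (Neg f) g))) (Mod o i g))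
| LCA_A3 i a : LCA (Imp (Tri i a) (Box i (emb a)))
| LCA_A4 i a : LCA (Imp (Tri i (Imp0 a (At0 (ARew i)))) (Mod OA i (emb a)))
| LCA_A5 i a : LCA (Imp (Tri i (Imp0 a (At0 (APun i)))) (Mod OR i (emb a)))
| LCA_A6 i f : LCA (Imp (Mod OA i f) (Mod OAreal i f))
| LCA_A7 i f : LCA (Imp (Mod OR i f) (Mod ORreal i f))
| LCA_A8 i f : LCA (Imp (Box i f) (Mod OAreal i (Neg f)))
| LCA_A9 i f : LCA (Imp (Box i f) (Mod ORreal i (Neg f)))
| LCA_A10 i f : LCA (Imp (Mod OAreal i f) (Box i (Imp f (rew i))))
| LCA_A11 i f : LCA (Imp (Mod ORreal i f) (Box i (Imp f (pun i))))
| LCA_R1 i f : LCA f -> LCA (Box i f)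
| LCA_R2 o i f : LCA f -> LCA (Mod o i (Neg f))
| LCA_R3 o i f g : LCA (Iff f g) -> LCA (Iff (Mod o i f) (Mod o i g)).

End LCA.

From HB Require Import structures.
From mathcomp Require Import all_boot.
From Stdlib Require Import Classical ClassicalEpsilon.

(* Completeness goes through a finite canonical model. Let [cl] be a finite
   set of formulas containing the unprovable [phi], closed under subformulas,
   containing [Box i (g -> rew_i)] (resp. [pun_i]) along with every modality
   of agent [i] applied to [g], and containing [A_i a] (resp. [R_i a]) along
   with every [Tri i (a -> rew_i)] (resp. [pun_i]). The states are the maximal
   consistent subsets [bs] of [cl], each in two copies [d = true/false].
   Since the relations E_i, A_i, R_i of a state are determined by its belief
   sets, the beliefs must be engineered: the propositional variables that do
   not occur in [cl] spell out [(bs, d)] in the valuation, so every set of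
   states is defined by some L0 formula. The beliefs of agent [i] are the
   [Tri i]-formulas of [bs], a formula [theta_relE] defining the intended
   E_i-successors, and [theta_irel Reward -> rew_i],
   [theta_irel Punishment -> pun_i], whose antecedents define the intended
   A_i- and R_i-successors. Axioms A10/A11 make these implications true at
   every intended E_i-successor, so E_i comes out as intended. Only copies
   with [d = true] are E_i-successors; a copy with [d = false] refutes
   [A_i g] without being forced into A_i by a real modality. *)

Set Implicit Arguments.
Unset Strict Implicit.
Unset Printing Implicit Defensive.

Lemma atom_eq_dec n : comparable (atom n).
Proof. by rewrite /comparable /decidable; decide equality; apply: eq_comparable. Qed.
HB.instance Definition _ n := hasDecEq.Build (atom n) (compareP (@atom_eq_dec n)).

Lemma form0_eq_dec n : comparable (form0 n).
Proof. by rewrite /comparable /decidable; decide equality; apply: eq_comparable. Qed.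
HB.instance Definition _ n := hasDecEq.Build (form0 n) (compareP (@form0_eq_dec n)).

Lemma mop_eq_dec : comparable mop.
Proof. by rewrite /comparable /decidable; decide equality. Qed.
HB.instance Definition _ := hasDecEq.Build mop (compareP mop_eq_dec).

Lemma form_eq_dec n : comparable (form n).
Proof. by rewrite /comparable /decidable; decide equality; apply: eq_comparable. Qed.
HB.instance Definition _ n := hasDecEq.Build (form n) (compareP (@form_eq_dec n)).

Lemma finite_image (T U : eqType) (L : seq T) (F : T -> U -> Prop) :
  (forall h f f', F h f -> F h f' -> f = f') ->
  exists L' : seq U, forall f, f \in L' <-> exists2 h, h \in L & F h f.
Proof.
move=> Ffun; elim: L => [|h L [L' HL']].
  by exists [::] => f; split=> // -[].
have [[f0 Hf0]|Hno] := classic (exists f, F h f).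
- exists (f0 :: L') => f; rewrite inE; split.
  + case/orP=> [/eqP->|/HL' [h' Hh' Hf]]; first by exists h; rewrite ?mem_head.
    by exists h'; rewrite // inE Hh' orbT.
  + case=> h'; rewrite inE => /orP[/eqP->|Hh'] Hf.
      by rewrite (Ffun _ _ _ Hf Hf0) eqxx.
    by apply/orP; right; apply/HL'; exists h'.
- exists L' => f; rewrite HL'; split=> -[h' Hh' Hf].
    by exists h'; rewrite // inE Hh' orbT.
  move: Hh'; rewrite inE => /orP[/eqP Eh|Hh']; last by exists h'.
  by case: Hno; exists f; rewrite -Eh.
Qed.

Ltac bool_tauto :=
  simpl; repeat match goal with |- context [?x] =>
    lazymatch type of x with bool =>
      lazymatch x with
      | true => fail | false => fail | negb _ => fail | andb _ _ => fail
      | orb _ _ => fail | implb _ _ => fail | _ => destruct x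
      end end end; done.

Section PropositionalReasoning.
Variable n : nat.
Implicit Types (f g h : form n) (L : seq (form n)) (i : agent n) (o : mop).

Definition top : form n := Neg (And (At (AP n 0)) (Neg (At (AP n 0)))).
Definition bot : form n := Neg top.
Definition Or f g : form n := Neg (And (Neg f) (Neg g)).
Fixpoint bigAnd L : form n := if L is f :: L' then And f (bigAnd L') else top.
Fixpoint bigOr L : form n := if L is f :: L' then Or f (bigOr L') else bot.

Lemma peval_top v : peval v top.
Proof. by rewrite /=; case: (v _). Qed.

Lemma peval_bigAnd v L : peval v (bigAnd L) = all (peval v) L.
Proof. by elim: L => [|f L /= ->]; rewrite ?peval_top. Qed.

Lemma peval_bigOr v L : peval v (bigOr L) = has (peval v) L.
Proof. by elim: L => [|f L /= ->]; bool_tauto. Qed.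

Lemma peval_bigAnd_Neg v L : peval v (bigAnd (map (@Neg n) L)) = ~~ has (peval v) L.
Proof. by rewrite peval_bigAnd all_map -all_predC. Qed.

Lemma LCA_conseq L g : (forall f, f \in L -> LCA f) ->
  (forall v, all (peval v) L -> peval v g) -> LCA g.
Proof.
elim: L g => [|f L IH] g HL Hg; first by apply: LCA_taut => v; apply: Hg.
apply: (@LCA_MP _ f); first by apply: HL; rewrite mem_head.
apply: IH => [h Hh|v HvL /=]; first by apply: HL; rewrite inE Hh orbT.
by case Hf: (peval v f) => //=; rewrite Hg //= Hf.
Qed.

Lemma LCA_conseq1 f g : LCA f -> (forall v, peval v f -> peval v g) -> LCA g.
Proof.
move=> Hf Hg; apply: (@LCA_conseq [:: f]) => [h|v /andP[/Hg]//].
by rewrite inE => /eqP->.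
Qed.

Lemma LCA_conseq2 f1 f2 g : LCA f1 -> LCA f2 ->
  (forall v, peval v f1 -> peval v f2 -> peval v g) -> LCA g.
Proof.
move=> Hf1 Hf2 Hg; apply: (@LCA_conseq [:: f1; f2]) => [h|v /and3P[/Hg H /H]//].
by rewrite !inE => /orP[]/eqP->.
Qed.

Lemma LCA_conseq3 f1 f2 f3 g : LCA f1 -> LCA f2 -> LCA f3 ->
  (forall v, peval v f1 -> peval v f2 -> peval v f3 -> peval v g) -> LCA g.
Proof.
move=> Hf1 Hf2 Hf3 Hg.
apply: (@LCA_conseq [:: f1; f2; f3]) => [h|v /and4P[/Hg H /H H' /H']//].
by rewrite !inE => /or3P[]/eqP->.
Qed.

Lemma LCA_bigAnd_imp L f : f \in L -> LCA (Imp (bigAnd L) f).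
Proof.
move=> Hf; apply: LCA_taut => v /=; rewrite peval_bigAnd.
by case Hall: (all _ _); rewrite //= (allP Hall f Hf).
Qed.

Lemma LCA_box_mono i f g : LCA (Imp f g) -> LCA (Imp (Box i f) (Box i g)).
Proof. by move=> /(LCA_R1 i) Hb; apply: (LCA_conseq2 Hb (LCA_A1 i f g)) => v; bool_tauto. Qed.

Lemma LCA_mod_congr o i f g : LCA (Iff f g) -> LCA (Imp (Mod o i f) (Mod o i g)).
Proof. by move=> /(LCA_R3 o i) H; apply: (LCA_conseq1 H) => v; bool_tauto. Qed.

Lemma LCA_mod_bot o i : LCA (Mod o i bot).
Proof. by apply: LCA_R2; apply: LCA_taut => v; apply: peval_top. Qed.

Lemma LCA_mod_anti o i f g : LCA (Imp g f) -> LCA (Imp (Mod o i f) (Mod o i g)).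
Proof.
move=> Hgf.
have Hbot : LCA (Mod o i (And (Neg f) (And f g))).
  apply: (LCA_MP (LCA_mod_bot o i)); apply: LCA_mod_congr.
  by apply: LCA_taut => v; bool_tauto.
have Hfg : LCA (Imp (Mod o i (And f g)) (Mod o i g)).
  by apply: LCA_mod_congr; apply: (LCA_conseq1 Hgf) => v; bool_tauto.
by apply: (LCA_conseq3 (LCA_A2 o i f (And f g)) Hbot Hfg) => v; bool_tauto.
Qed.

Lemma LCA_mod_or o i f g : LCA (Imp (And (Mod o i f) (Mod o i g)) (Mod o i (Or f g))).
Proof.
have Hg : LCA (Imp (Mod o i g) (Mod o i (And (Neg f) (Or f g)))).
  by apply: LCA_mod_anti; apply: LCA_taut => v; bool_tauto.
by apply: (LCA_conseq2 (LCA_A2 o i f (Or f g)) Hg) => v; bool_tauto.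
Qed.

Lemma LCA_mod_bigOr o i L : LCA (Imp (bigAnd (map (Mod o i) L)) (Mod o i (bigOr L))).
Proof.
elim: L => [|f L IH] /=; first by apply: (LCA_conseq1 (LCA_mod_bot o i)) => v /= ->; rewrite andbF.
by apply: (LCA_conseq2 IH (LCA_mod_or o i f (bigOr L))) => v; bool_tauto.
Qed.

Lemma LCA_box_bigAnd i L : LCA (Imp (bigAnd (map (Box i) L)) (Box i (bigAnd L))).
Proof.
elim: L => [|f L IH] /=.
  have Htop : LCA (Box i top) by apply: LCA_R1; apply: LCA_taut => v; apply: peval_top.
  by apply: (LCA_conseq1 Htop) => v /= ->; rewrite andbF.
have Hf : LCA (Imp (Box i (bigAnd L)) (Box i (Imp f (And f (bigAnd L))))).
  by apply: LCA_box_mono; apply: LCA_taut => v; bool_tauto.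
by apply: (LCA_conseq3 IH Hf (LCA_A1 i f (And f (bigAnd L)))) => v; bool_tauto.
Qed.

End PropositionalReasoning.
Arguments top {n}.
Arguments bot {n}.

Section Soundness.
Variable n : nat.
Implicit Types (U : state n -> Prop) (S : state n) (f g : form n) (i : agent n).

Definition mop_rel o i S S' : Prop :=
  match o with
  | OA => relA i S S'
  | OR => relR i S S'
  | OAreal => relE i S S' -> relA i S S'
  | ORreal => relE i S S' -> relR i S S'
  end.

Lemma sat_Mod U S o i g :
  sat U S (Mod o i g) <-> forall S', U S' -> sat U S' g -> mop_rel o i S S'.
Proof. by case: o. Qed.

Lemma sat_emb U S a : sat U S (emb a) <-> sat0 S a.
Proof. by elim: a => [x|b IH|b IHb c IHc|j b _] /=; tauto. Qed.

Lemma sat_imp U S f g : sat U S (Imp f g) <-> (sat U S f -> sat U S g).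
Proof. by split=> /= [H Hf|H [/H]//]; apply: NNPP => Hg; apply: H. Qed.

Lemma sat_Iff U S f g : sat U S (Iff f g) <-> (sat U S f <-> sat U S g).
Proof. by move: (sat_imp U S f g) (sat_imp U S g f) => /=; tauto. Qed.

Definition satb U S f : bool :=
  if excluded_middle_informative (sat U S f) then true else false.

Lemma peval_satb U S f : peval (satb U S) f <-> sat U S f.
Proof.
elim: f => [x|g IH|g IHg h IHh|j a|j g|o j g] /=;
  try by rewrite /satb; case: excluded_middle_informative; split.
- by split=> [/negP H /IH|H]; last apply/negP => /IH.
- by split=> [/andP[/IHg ? /IHh ?]|[/IHg -> /IHh ->]].
Qed.

Lemma sat_Mod_equiv U S o i f g : (forall S', U S' -> (sat U S' f <-> sat U S' g)) ->
  sat U S (Mod o i f) -> sat U S (Mod o i g).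
Proof.
move=> E /sat_Mod H; apply/sat_Mod => S' HU Hg.
by apply: H => //; apply/(E S' HU).
Qed.

Theorem LCA_sound f : LCA f -> valid f.
Proof.
elim=> {f} [f Hf|f g _ IHf _ IHfg|i f g|o i f g|i a|i a|i a|i f|i f|i f|i f|i f|i f
  |i f _ IH|o i f _ IH|o i f g _ IH] U S HS.
- exact/peval_satb.
- by move: (IHfg U S HS) => /sat_imp; apply; apply: IHf.
- apply/sat_imp => -[Hf Hfg] S' HU HE.
  by move: (Hfg S' HU HE) => /sat_imp; apply; apply: Hf.
- apply/sat_imp => H.
  have [/sat_Mod Hf /sat_Mod Hfg] : sat U S (Mod o i f) /\ sat U S (Mod o i (And (Neg f) g)) := H.
  apply/sat_Mod => S' HU Hg.
  by case: (classic (sat U S' f)) => Hf'; [apply: Hf | apply: Hfg].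
- by apply/sat_imp => /= Ha S' HU HE; apply/sat_emb; apply: HE.
- by apply/sat_imp => /= Ha S' HU /sat_emb Hs; exists a.
- by apply/sat_imp => /= Ha S' HU /sat_emb Hs; exists a.
- by apply/sat_imp => /= H S' HU Hf _; apply: H.
- by apply/sat_imp => /= H S' HU Hf _; apply: H.
- by apply/sat_imp => /= H S' HU Hf HE; case: (Hf (H S' HU HE)).
- by apply/sat_imp => /= H S' HU Hf HE; case: (Hf (H S' HU HE)).
- apply/sat_imp => /= H S' HU HE [Hf Hr]; case: (H S' HU Hf HE) => a [Ha Hs].
  by move: (HE _ Ha) => /=; tauto.
- apply/sat_imp => /= H S' HU HE [Hf Hr]; case: (H S' HU Hf HE) => a [Ha Hs].
  by move: (HE _ Ha) => /=; tauto.
- by move=> S' HU _; apply: IH.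
- by apply/sat_Mod => S' HU /= []; apply: IH.
- have E S' : U S' -> sat U S' f <-> sat U S' g by move=> HU; apply/sat_Iff/IH.
  apply/sat_Iff; split; apply: sat_Mod_equiv => S' /E //; exact: iff_sym.
Qed.

End Soundness.

Inductive incentive := Reward | Punishment.

Section Incentives.
Variable n : nat.
Implicit Types (k : incentive) (i : agent n) (S : state n).

Definition imod k : mop := if k is Reward then OA else OR.
Definition imod_real k : mop := if k is Reward then OAreal else ORreal.
Definition iatom k i : atom n := if k is Reward then ARew i else APun i.
Definition irel k i S S' : Prop := if k is Reward then relA i S S' else relR i S S'.
Definition mop_atom o i : atom n :=
  match o with OA | OAreal => ARew i | OR | ORreal => APun i end.

Lemma mop_cases o : exists k, o = imod k \/ o = imod_real k.
Proof.
by case: o; [exists Reward; left | exists Punishment; left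
            | exists Reward; right | exists Punishment; right].
Qed.

Lemma mop_atom_imod k i : mop_atom (imod k) i = iatom k i.
Proof. by case: k. Qed.

Lemma mop_atom_imod_real k i : mop_atom (imod_real k) i = iatom k i.
Proof. by case: k. Qed.

Lemma iatom_inj i k k' : iatom k i = iatom k' i -> k = k'.
Proof. by case: k; case: k'. Qed.

Lemma irelE k i S S' :
  irel k i S S' <-> exists a, Bel S i (Imp0 a (At0 (iatom k i))) /\ sat0 S' a.
Proof. by case: k. Qed.

Lemma sat_imod U S k i g :
  sat U S (Mod (imod k) i g) <-> forall S', U S' -> sat U S' g -> irel k i S S'.
Proof. by case: k. Qed.

Lemma sat_imod_real U S k i g : sat U S (Mod (imod_real k) i g) <->
  forall S', U S' -> sat U S' g -> relE i S S' -> irel k i S S'.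
Proof. by case: k. Qed.

Lemma LCA_A4_5 k i a : LCA (Imp (Tri i (Imp0 a (At0 (iatom k i)))) (Mod (imod k) i (emb a))).
Proof. by case: k; [apply: LCA_A4 | apply: LCA_A5]. Qed.

Lemma LCA_A6_7 k i f : LCA (Imp (Mod (imod k) i f) (Mod (imod_real k) i f)).
Proof. by case: k; [apply: LCA_A6 | apply: LCA_A7]. Qed.

Lemma LCA_A8_9 k i f : LCA (Imp (Box i f) (Mod (imod_real k) i (Neg f))).
Proof. by case: k; [apply: LCA_A8 | apply: LCA_A9]. Qed.

Lemma LCA_A10_11 k i f : LCA (Imp (Mod (imod_real k) i f) (Box i (Imp f (At (iatom k i))))).
Proof. by case: k; [apply: LCA_A10 | apply: LCA_A11]. Qed.

End Incentives.

Section MaximalConsistent.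
Variable n : nat.
Implicit Types (f g : form n) (L : seq (form n)) (bs : seq bool).

Definition consistent f := ~ LCA (Neg f).

Fixpoint lits L bs : form n :=
  match L, bs with
  | f :: L', b :: bs' => And (if b then f else Neg f) (lits L' bs')
  | _, _ => top
  end.

Lemma lits_decide L bs g : size bs = size L -> g \in L ->
  (forall v, peval v (lits L bs) -> peval v g) \/
  (forall v, peval v (lits L bs) -> ~~ peval v g).
Proof.
elim: L bs => [|f L IH] [|b bs] //= [Hs]; rewrite inE => /orP[/eqP->|/(IH _ Hs)[] H].
- by case: b; [left|right] => v /andP[].
- by left=> v /andP[_ /H].
- by right=> v /andP[_ /H].
Qed.

Lemma lindenbaum L f : consistent f ->
  exists2 bs, size bs = size L & consistent (And (lits L bs) f).
Proof.
elim: L f => [|g L IH] f Hf.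
  by exists [::] => // H; apply: Hf; apply: (LCA_conseq1 H) => v; bool_tauto.
have [Hg|Hg] := classic (LCA (Neg (And f g))).
- have Hng : consistent (And f (Neg g)).
    by move=> H; apply: Hf; apply: (LCA_conseq2 Hg H) => v; bool_tauto.
  have [bs Hs Hc] := IH _ Hng; exists (false :: bs); first by rewrite /= Hs.
  by move=> H; apply: Hc; apply: (LCA_conseq1 H) => v; bool_tauto.
- have [bs Hs Hc] := IH _ Hg; exists (true :: bs); first by rewrite /= Hs.
  by move=> H; apply: Hc; apply: (LCA_conseq1 H) => v; bool_tauto.
Qed.

Lemma consistent_weaken f g h : consistent (And f g) -> LCA (Imp g h) -> consistent (And f h).
Proof. by move=> Hc Hgh H; apply: Hc; apply: (LCA_conseq2 Hgh H) => v; bool_tauto. Qed.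

End MaximalConsistent.

Section PropositionalVariables.
Variable n : nat.
Implicit Types (a b : form0 n) (f : form n) (S : state n).

Fixpoint var_bound0 a : nat :=
  match a with
  | At0 (AP j) => j.+1
  | At0 _ => 0
  | Neg0 b => var_bound0 b
  | And0 b c => maxn (var_bound0 b) (var_bound0 c)
  | Tri0 _ b => var_bound0 b
  end.

Fixpoint var_bound f : nat :=
  match f with
  | At x => var_bound0 (At0 x)
  | Neg g => var_bound g
  | And g h => maxn (var_bound g) (var_bound h)
  | Tri _ a => var_bound0 a
  | Box _ g => var_bound g
  | Mod _ _ g => var_bound g
  end.

Definition top0 : form0 n := Neg0 (And0 (At0 (AP n 0)) (Neg0 (At0 (AP n 0)))).
Definition Or0 a b : form0 n := Neg0 (And0 (Neg0 a) (Neg0 b)).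

Fixpoint charf (P : seq bool -> Prop) (len k : nat) : form0 n :=
  match len with
  | 0 => if excluded_middle_informative (P [::]) then top0 else Neg0 top0
  | len'.+1 =>
      Or0 (And0 (At0 (AP n k)) (charf (fun bl => P (true :: bl)) len' k.+1))
          (And0 (Neg0 (At0 (AP n k))) (charf (fun bl => P (false :: bl)) len' k.+1))
  end.

Lemma charf_sat S P len k bl : size bl = len ->
  (forall j, j < len -> (Val S (AP n (k + j)) <-> nth false bl j)) ->
  (sat0 S (charf P len k) <-> P bl).
Proof.
elim: len P k bl => [|len IH] P k [|b bl] //= Hs Hbl.
  by case: excluded_middle_informative => HP /=; split=> //; tauto.
case: Hs => Hs.
have Hb : Val S (AP n k) <-> b by move: (Hbl 0 isT); rewrite addn0.
have Hrest P' : sat0 S (charf P' len k.+1) <-> P' bl.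
  by apply: IH => // j Hj; move: (Hbl j.+1 Hj); rewrite addSnnS.
rewrite !Hrest; case: b Hb {Hbl} => Hb.
- have Hk : Val S (AP n k) by apply/Hb.
  tauto.
- have Hk : ~ Val S (AP n k) by move/Hb.
  tauto.
Qed.

Lemma var_bound0_Imp0 a b : var_bound0 (Imp0 a b) = maxn (var_bound0 a) (var_bound0 b).
Proof. by []. Qed.

Lemma var_bound_charf P len k : k < var_bound0 (charf P len.+1 k).
Proof. by rewrite /= !leq_max leqnn. Qed.

End PropositionalVariables.
Arguments charf {n}.

Section CanonicalModel.
Variables (n : nat) (cl : seq (form n)) (k0 : nat).
Implicit Types (f g h : form n) (a : form0 n) (L : seq (form n)) (bs : seq bool).
Implicit Types (i : agent n) (k : incentive) (o : mop) (d : bool).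

Hypothesis cl_Neg : forall g, Neg g \in cl -> g \in cl.
Hypothesis cl_And : forall g h, And g h \in cl -> g \in cl /\ h \in cl.
Hypothesis cl_Box : forall i g, Box i g \in cl -> g \in cl.
Hypothesis cl_Mod : forall o i g,
  Mod o i g \in cl -> g \in cl /\ Box i (Imp g (At (mop_atom o i))) \in cl.
Hypothesis cl_Tri : forall i a, Tri i a \in cl -> emb a \in cl.
Hypothesis cl_Tri_imod : forall k i a,
  Tri i (Imp0 a (At0 (iatom k i))) \in cl -> Mod (imod k) i (emb a) \in cl.
Hypothesis cl_var_bound : forall g, g \in cl -> var_bound g <= k0.

Local Notation m := (size cl).

(* [bs] selects, for each formula of [cl] in turn, the formula or its negation. *)
Definition mcs bs := size bs = m /\ consistent (lits cl bs).
Definition entails bs g := LCA (Imp (lits cl bs) g).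

Lemma entails_LCA bs g : LCA g -> entails bs g.
Proof. by move=> H; apply: (LCA_conseq1 H) => v; bool_tauto. Qed.

Lemma entails_mp bs f g : entails bs f -> LCA (Imp f g) -> entails bs g.
Proof. by move=> Hf Hfg; apply: (LCA_conseq2 Hf Hfg) => v; bool_tauto. Qed.

Lemma entails_mp2 bs f g h : entails bs f -> entails bs g -> LCA (Imp f (Imp g h)) ->
  entails bs h.
Proof. by move=> Hf Hg Hh; apply: (LCA_conseq3 Hf Hg Hh) => v; bool_tauto. Qed.

Lemma entails_And bs f g : entails bs (And f g) <-> entails bs f /\ entails bs g.
Proof.
split=> [H|[Hf Hg]]; last by apply: (LCA_conseq2 Hf Hg) => v; bool_tauto.
by split; apply: (LCA_conseq1 H) => v; bool_tauto.
Qed.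

Lemma entails_bigAnd bs L : (forall f, f \in L -> entails bs f) -> entails bs (bigAnd L).
Proof.
elim: L => [|f L IH] HL /=; first by apply: entails_LCA; apply: LCA_taut; apply: peval_top.
apply/entails_And; split; first by apply: HL; rewrite mem_head.
by apply: IH => g Hg; apply: HL; rewrite inE Hg orbT.
Qed.

Lemma entails_Neg bs g : mcs bs -> g \in cl -> (entails bs (Neg g) <-> ~ entails bs g).
Proof.
move=> [Hs Hc] Hg; split=> [Hng Hpg|Hng].
  by apply: Hc; apply: (LCA_conseq2 Hpg Hng) => v; bool_tauto.
case: (lits_decide Hs Hg) => H; first by case: Hng; apply: LCA_taut => v /=;
  case E: (peval v _); rewrite //= (H _ E).
by apply: LCA_taut => v /=; case E: (peval v _); rewrite //= (H _ E).
Qed.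

Lemma mcs_extend f : consistent f -> exists2 bs, mcs bs & consistent (And (lits cl bs) f).
Proof.
move=> /(lindenbaum cl) [bs Hs Hc]; exists bs => //; split=> // H.
by apply: Hc; apply: (LCA_conseq1 H) => v; bool_tauto.
Qed.

Lemma mcs_entails bs f g : mcs bs -> consistent (And (lits cl bs) f) -> g \in cl ->
  LCA (Imp f g) -> entails bs g.
Proof.
move=> Hbs Hc Hg Hfg; apply: NNPP => /(entails_Neg Hbs Hg) Hng.
by apply: Hc; apply: (LCA_conseq2 Hfg Hng) => v; bool_tauto.
Qed.

Lemma not_entails bs f g : consistent (And (lits cl bs) f) -> LCA (Imp f (Neg g)) ->
  ~ entails bs g.
Proof. by move=> Hc Hfg Hg; apply: Hc; apply: (LCA_conseq2 Hfg Hg) => v; bool_tauto. Qed.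

Lemma entails_Mod_cover bs o i L g : (forall c, c \in L -> entails bs (Mod o i c)) ->
  LCA (Imp g (bigOr L)) -> entails bs (Mod o i g).
Proof.
move=> HL Hg; apply: entails_mp (LCA_mod_anti o i Hg).
apply: entails_mp (LCA_mod_bigOr o i L); apply: entails_bigAnd => _ /mapP[c Hc ->].
exact: HL.
Qed.

Definition relE_succ bs i bs' :=
  (forall c, Box i c \in cl -> entails bs (Box i c) -> entails bs' c) /\
  (forall a, Tri i a \in cl -> entails bs (Tri i a) -> entails bs' (emb a)).

Definition mod_witness o bs i bs' :=
  exists c, [/\ Mod o i c \in cl, entails bs (Mod o i c) & entails bs' c].

Definition irel_succ k bs i bs' d :=
  mod_witness (imod k) bs i bs' \/
  [/\ d, relE_succ bs i bs' & mod_witness (imod_real k) bs i bs'].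

Definition theta_relE bs i : form0 n :=
  charf (fun bl => nth false bl m /\ relE_succ bs i (take m bl)) m.+1 k0.
Definition theta_irel k bs i : form0 n :=
  charf (fun bl => irel_succ k bs i (take m bl) (nth false bl m)) m.+1 k0.

(* Variables [AP j] with [k0 <= j] do not occur in [cl]; they spell out [rcons bs d]. *)
Definition cval bs d (x : atom n) : Prop :=
  if x is AP j then
    (if k0 <= j then nth false (rcons bs d) (j - k0) : Prop else entails bs (At x))
  else entails bs (At x).

Definition cbel bs i a : Prop :=
  [\/ Tri i a \in cl /\ entails bs (Tri i a), a = theta_relE bs i
    | exists k, a = Imp0 (theta_irel k bs i) (At0 (iatom k i))].

Definition cstate bs d : state n := State (cbel bs) (cval bs d).
Definition cmodel (S : state n) : Prop := exists bs d, mcs bs /\ S = cstate bs d.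

Lemma cmodel_cstate bs d : mcs bs -> cmodel (cstate bs d).
Proof. by exists bs, d. Qed.

Lemma cstate_iatom bs d k i : Val (cstate bs d) (iatom k i) <-> entails bs (At (iatom k i)).
Proof. by case: k. Qed.

Lemma sat0_cstate_charf P bs d : size bs = m ->
  (sat0 (cstate bs d) (charf P m.+1 k0) <-> P (rcons bs d)).
Proof.
move=> Hs; apply: charf_sat; first by rewrite size_rcons Hs.
by move=> j Hj /=; rewrite leq_addr addKn.
Qed.

Lemma theta_relE_sat bs i bs' d : size bs' = m ->
  (sat0 (cstate bs' d) (theta_relE bs i) <-> d /\ relE_succ bs i bs').
Proof.
by move=> Hs; rewrite sat0_cstate_charf // nth_rcons Hs ltnn eqxx -cats1 take_size_cat.
Qed.

Lemma theta_irel_sat k bs i bs' d : size bs' = m ->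
  (sat0 (cstate bs' d) (theta_irel k bs i) <-> irel_succ k bs i bs' d).
Proof.
by move=> Hs; rewrite sat0_cstate_charf // nth_rcons Hs ltnn eqxx -cats1 take_size_cat.
Qed.

Lemma cstate_sat0 bs d a : mcs bs -> emb a \in cl ->
  (sat0 (cstate bs d) a <-> entails bs (emb a)).
Proof.
move=> Hbs; elim: a => [x|b IH|b IHb c IHc|i b _] /= Ha.
- case: x Ha => //= j /cl_var_bound /= Hj; by rewrite leqNgt Hj.
- by move: (IH (cl_Neg Ha)); rewrite (entails_Neg Hbs (cl_Neg Ha)); tauto.
- have [Hb Hc] := cl_And Ha; by rewrite entails_And IHb // IHc.
- split=> [Hbel|Hb]; last by apply: Or31.
  (* The other beliefs mention [AP k0], so they are not formulas of [cl]. *)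
  have := cl_var_bound Ha; rewrite /= leqNgt.
  case: Hbel => [[]//|->|[k ->]]; first by rewrite var_bound_charf.
  by rewrite var_bound0_Imp0 leq_max var_bound_charf.
Qed.

Lemma irel_succ_entails_iatom k bs i bs' : relE_succ bs i bs' ->
  irel_succ k bs i bs' true -> entails bs' (At (iatom k i)).
Proof.
move=> Hsucc HN.
have real_witness c : Mod (imod k) i c \in cl \/ Mod (imod_real k) i c \in cl ->
    entails bs (Mod (imod_real k) i c) -> entails bs' c -> entails bs' (At (iatom k i)).
  move=> Hcl Hreal Hc.
  have Hbox : Box i (Imp c (At (iatom k i))) \in cl.
    by case: Hcl => /cl_Mod[_]; rewrite ?mop_atom_imod ?mop_atom_imod_real.
  apply: (entails_mp2 Hc (Hsucc.1 _ Hbox (entails_mp Hreal (LCA_A10_11 k i c)))).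
  by apply: LCA_taut => v; bool_tauto.
case: HN => [[c [Hcl Hc Hc']]|[_ _ [c [Hcl Hc Hc']]]].
- by apply: (real_witness c) => //; [left | apply: entails_mp Hc (LCA_A6_7 k i c)].
- by apply: (real_witness c) => //; right.
Qed.

Lemma relE_cstate i bs d bs' d' : mcs bs' ->
  (relE i (cstate bs d) (cstate bs' d') <-> d' /\ relE_succ bs i bs').
Proof.
move=> Hbs'; have Hs : size bs' = m by case: Hbs'.
split=> [H|[Hd Hsucc] a].
  by apply/(theta_relE_sat bs i d' Hs); apply: H; apply: Or32.
case=> [[Ha Hh]|->|[k ->]].
- by apply/(cstate_sat0 d' Hbs' (cl_Tri Ha)); apply: Hsucc.2.
- exact/theta_relE_sat.
- move=> /= [/(theta_irel_sat k bs i d' Hs)]; rewrite Hd => HN; apply.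
  by apply/cstate_iatom; apply: irel_succ_entails_iatom HN.
Qed.

Lemma irel_cstate k i bs d bs' d' : mcs bs' ->
  (irel k i (cstate bs d) (cstate bs' d') <-> irel_succ k bs i bs' d').
Proof.
move=> Hbs'; have Hs : size bs' = m by case: Hbs'.
rewrite irelE; split=> [[a [Hbel Ha]]|HN]; last first.
  by exists (theta_irel k bs i); split; [apply: Or33; exists k | apply/theta_irel_sat].
case: Hbel => [[Hcl Hh]|Eth|[k' Eth]].
- left; exists (emb a); split; [exact: cl_Tri_imod | exact: entails_mp Hh (LCA_A4_5 k i a) |].
  have /cl_Neg/cl_And[Hea _] := cl_Tri Hcl.
  exact/(cstate_sat0 d' Hbs' Hea).
- by move: Eth; rewrite /theta_relE /= /Imp0 /Or0.
- case: Eth => Ea /iatom_inj ->; rewrite Ea in Ha.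
  exact/(theta_irel_sat k' bs i d' Hs).
Qed.

Lemma box_content bs i : exists B, entails bs (Box i (bigAnd B)) /\
  forall bs', mcs bs' -> consistent (And (lits cl bs') (bigAnd B)) -> relE_succ bs i bs'.
Proof.
have [|B HB] := @finite_image _ _ cl
  (fun h f => entails bs h /\ (h = Box i f \/ exists2 a, h = Tri i a & f = emb a)).
  by move=> h f f' [_ [E1|[a E1 E2]]] [_ [E3|[a' E3 E4]]]; congruence.
exists B; split=> [|bs' Hbs' Hc].
  apply: entails_mp (LCA_box_bigAnd i B); apply: entails_bigAnd => _ /mapP[c /HB[h _] Hh ->].
  case: Hh => Hh [<-//|[a Eh ->]]; rewrite Eh in Hh.
  exact: entails_mp Hh (LCA_A3 i a).
split=> [c Hcl Hc'|a Hcl Ha]; apply: (mcs_entails Hbs' Hc).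
- exact: cl_Box Hcl.
- by apply: LCA_bigAnd_imp; apply/HB; exists (Box i c) => //; split=> //; left.
- exact: cl_Tri Hcl.
- by apply: LCA_bigAnd_imp; apply/HB; exists (Tri i a) => //; split=> //; right; exists a.
Qed.

Lemma mod_content bs o i : exists L, (forall c, c \in L -> entails bs (Mod o i c)) /\
  forall c, Mod o i c \in cl -> entails bs (Mod o i c) -> c \in L.
Proof.
have [|L HL] := @finite_image _ _ cl (fun h c => entails bs h /\ h = Mod o i c).
  by move=> h c c' [_ ->] [_ []].
exists L; split=> [c /HL[h _ [Hh <-]] //|c Hcl Hc].
by apply/HL; exists (Mod o i c).
Qed.

Definition truthful g :=
  forall bs d, mcs bs -> (sat cmodel (cstate bs d) g <-> entails bs g).

Lemma truthful_Box i g : Box i g \in cl -> truthful g -> truthful (Box i g).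
Proof.
move=> Hcl IH bs d Hbs; split=> [Hsat|Hh S' [bs' [d' [Hbs' ->]]]]; last first.
  by case/(relE_cstate _ _ _ _ Hbs') => _ Hsucc; apply/IH => //; apply: Hsucc.1.
apply: NNPP => Hn; have [B [HB HBsucc]] := box_content bs i.
have Hcons : consistent (And (bigAnd B) (Neg g)).
  by move=> H; apply: Hn; apply: entails_mp HB (LCA_box_mono i H).
have [bs' Hbs' Hcons'] := mcs_extend Hcons.
have Hsucc : relE_succ bs i bs'.
  by apply: HBsucc (consistent_weaken Hcons' _) => //; apply: LCA_taut => v; bool_tauto.
apply: (not_entails Hcons' (g := g)); first by apply: LCA_taut => v; bool_tauto.
apply/(IH bs' true Hbs'); apply: Hsat; first exact: cmodel_cstate.
exact/relE_cstate.
Qed.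

Lemma truthful_imod k i g : Mod (imod k) i g \in cl -> truthful g ->
  truthful (Mod (imod k) i g).
Proof.
move=> Hcl IH bs d Hbs; rewrite sat_imod.
split=> [Hsat|Hh S' [bs' [d' [Hbs' ->]]] /IH Hg]; last first.
  by apply/irel_cstate => //; left; exists g; split=> //; apply: Hg.
apply: NNPP => Hn; have [L [HL HLcl]] := mod_content bs (imod k) i.
have Hcons : consistent (And g (bigAnd (map (@Neg n) L))).
  move=> H; apply: Hn; apply: entails_Mod_cover HL _.
  by apply: (LCA_conseq1 H) => v; rewrite /= peval_bigAnd_Neg peval_bigOr; bool_tauto.
have [bs' Hbs' Hcons'] := mcs_extend Hcons.
have Hg : entails bs' g.
  by apply: (mcs_entails Hbs' Hcons' (cl_Mod Hcl).1); apply: LCA_taut => v; bool_tauto.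
(* The copy [false] of [bs'] is no E_i-successor, so no real modality applies. *)
have := Hsat _ (cmodel_cstate false Hbs') (proj2 (IH _ false Hbs') Hg).
case/(irel_cstate _ _ _ _ _ Hbs') => [[c [Hccl Hc Hc']]|[]//].
apply: (not_entails Hcons') Hc'; apply: LCA_taut => v /=; rewrite peval_bigAnd_Neg.
case E: (peval v c); last by rewrite andbF.
have -> : has (peval v) L by apply/hasP; exists c => //; apply: HLcl.
by rewrite andbF.
Qed.

Lemma truthful_imod_real k i g : Mod (imod_real k) i g \in cl -> truthful g ->
  truthful (Mod (imod_real k) i g).
Proof.
move=> Hcl IH bs d Hbs; rewrite sat_imod_real.
split=> [Hsat|Hh S' [bs' [d' [Hbs' ->]]] /IH Hg /(relE_cstate _ _ _ _ Hbs') [Hd Hsucc]];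
  last by apply/irel_cstate => //; right; split=> //; exists g; split=> //; apply: Hg.
apply: NNPP => Hn.
have [L1 [HL1 HL1cl]] := mod_content bs (imod k) i.
have [L2 [HL2 HL2cl]] := mod_content bs (imod_real k) i.
have [B [HB HBsucc]] := box_content bs i.
have Hcons : consistent (And g (And (bigAnd B) (bigAnd (map (@Neg n) (L1 ++ L2))))).
  move=> H; apply: Hn; apply: (@entails_Mod_cover _ _ _ (Neg (bigAnd B) :: L1 ++ L2)).
    move=> c; rewrite inE mem_cat => /or3P[/eqP->|/HL1 Hc|/HL2 //].
      exact: entails_mp HB (LCA_A8_9 k i _).
    exact: entails_mp Hc (LCA_A6_7 k i c).
  by apply: (LCA_conseq1 H) => v; rewrite /= peval_bigAnd_Neg peval_bigOr; bool_tauto.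
have [bs' Hbs' Hcons'] := mcs_extend Hcons.
have Hg : entails bs' g.
  by apply: (mcs_entails Hbs' Hcons' (cl_Mod Hcl).1); apply: LCA_taut => v; bool_tauto.
have Hsucc : relE_succ bs i bs'.
  by apply: HBsucc (consistent_weaken Hcons' _) => //; apply: LCA_taut => v; bool_tauto.
have Hnot c : c \in L1 ++ L2 -> ~ entails bs' c.
  move=> HcL; apply: (not_entails Hcons'); apply: LCA_taut => v /=; rewrite peval_bigAnd_Neg.
  case E: (peval v c); last by rewrite andbF.
  have -> : has (peval v) (L1 ++ L2) by apply/hasP; exists c.
  by rewrite !andbF.
have := Hsat _ (cmodel_cstate true Hbs') (proj2 (IH _ true Hbs') Hg).
move=> /(_ (proj2 (relE_cstate _ _ _ _ Hbs') (conj isT Hsucc))).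
case/(irel_cstate _ _ _ _ _ Hbs') => [[c [Hccl Hc Hc']]|[_ _ [c [Hccl Hc Hc']]]];
  apply: (Hnot c) Hc'; rewrite mem_cat.
  by rewrite HL1cl.
by rewrite HL2cl ?orbT.
Qed.

Lemma truth_lemma g : g \in cl -> truthful g.
Proof.
elim: g => [x|g IH|g IHg h IHh|i a|i g IH|o i g IH] Hcl.
- by move=> bs d Hbs; apply: (@cstate_sat0 _ _ (At0 x)).
- move=> bs d Hbs; move: (IH (cl_Neg Hcl) bs d Hbs).
  by rewrite (entails_Neg Hbs (cl_Neg Hcl)) /=; tauto.
- move=> bs d Hbs; have [Hg Hh] := cl_And Hcl.
  by rewrite entails_And /= (IHg Hg) // (IHh Hh).
- by move=> bs d Hbs; apply: (@cstate_sat0 _ _ (Tri0 i a)).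
- by apply: truthful_Box => //; apply: IH; apply: cl_Box Hcl.
- have IHg := IH (cl_Mod Hcl).1.
  have [k [Eo|Eo]] := mop_cases o; rewrite Eo in Hcl *.
  + exact: truthful_imod.
  + exact: truthful_imod_real.
Qed.

Lemma not_valid_of_not_LCA phi : phi \in cl -> ~ LCA phi -> ~ valid phi.
Proof.
move=> Hcl Hn Hv.
have Hc : consistent (Neg phi) by move=> H; apply: Hn; apply: (LCA_conseq1 H) => v; bool_tauto.
have [bs Hbs Hc'] := mcs_extend Hc.
apply: (not_entails Hc' (g := phi)); first by apply: LCA_taut => v; bool_tauto.
by apply/(truth_lemma Hcl false Hbs); apply: Hv; apply: cmodel_cstate.
Qed.

End CanonicalModel.

Section Closure.
Variable n : nat.
Implicit Types (f g h : form n) (a b : form0 n) (i : agent n) (k : incentive).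

Definition mod_closure o i g : seq (form n) :=
  let t := At (mop_atom o i) in [:: Mod o i g; Box i (Imp g t); Imp g t; And g (Neg t); Neg t; t].

Definition dest_incentive i b : option (incentive * form0 n) :=
  match b with
  | Neg0 (And0 a (Neg0 (At0 (ARew j)))) => if j == i then Some (Reward, a) else None
  | Neg0 (And0 a (Neg0 (At0 (APun j)))) => if j == i then Some (Punishment, a) else None
  | _ => None
  end.

Lemma dest_incentiveP i b k a : dest_incentive i b = Some (k, a) -> b = Imp0 a (At0 (iatom k i)).
Proof. by case: b => // [[]] // a' [] // [] // [] // j /=; case: eqP => // -> [<- <-]. Qed.

Lemma dest_incentive_Imp0 i k a : dest_incentive i (Imp0 a (At0 (iatom k i))) = Some (k, a).
Proof. by case: k; rewrite /= eqxx. Qed.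

Definition incentive_closure i b : seq (form n) :=
  if dest_incentive i b is Some (k, a) then mod_closure (imod k) i (emb a) else [::].

Fixpoint closure0 a : seq (form n) :=
  match a with
  | At0 x => [:: At x]
  | Neg0 b => emb a :: closure0 b
  | And0 b c => emb a :: closure0 b ++ closure0 c
  | Tri0 i b => Tri i b :: closure0 b ++ incentive_closure i b
  end.

Fixpoint closure f : seq (form n) :=
  match f with
  | At _ => [:: f]
  | Neg g => f :: closure g
  | And g h => f :: closure g ++ closure h
  | Tri i b => closure0 (Tri0 i b)
  | Box i g => f :: closure g
  | Mod o i g => mod_closure o i g ++ closure g
  end.

Lemma closure_emb a : closure (emb a) = closure0 a.
Proof. by elim: a => //= [b -> | b -> c ->]. Qed.

Lemma mem_closure f : f \in closure f.
Proof. by case: f => *; rewrite /= ?mem_head. Qed.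

Lemma mod_closure_closed o i g h : h \in mod_closure o i g ->
  {subset closure h <= mod_closure o i g ++ closure g}.
Proof.
rewrite !inE; do ![case/orP=> [|]]; move/eqP-> => x;
  cbn [closure Imp]; rewrite /mod_closure /Imp !(in_cons, mem_cat, in_nil); bool_tauto.
Qed.

Lemma closure0_closed a h : h \in closure0 a -> {subset closure h <= closure0 a}.
Proof.
elim: a h => [x|b IH|b IHb c IHc|i b IH] h /=.
- by rewrite inE => /eqP-> y.
- rewrite inE => /orP[/eqP->|/IH Hsub y /Hsub Hy]; last by rewrite inE Hy orbT.
  by rewrite /= closure_emb => y.
- rewrite inE mem_cat => /orP[/eqP->|/orP[/IHb|/IHc] Hsub y /Hsub Hy].
  + by rewrite /= !closure_emb => y.
  + by rewrite inE mem_cat Hy orbT.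
  + by rewrite inE mem_cat Hy !orbT.
- rewrite inE mem_cat => /orP[/eqP-> y //|/orP[/IH Hsub y /Hsub Hy|]].
    by rewrite inE mem_cat Hy orbT.
  rewrite /incentive_closure; case E: dest_incentive => [[k a]|] // Hh y.
  have Hab : {subset closure0 a <= closure0 b}.
    move=> z Hz; rewrite (dest_incentiveP E); cbn [closure0 Imp0].
    by rewrite !in_cons mem_cat Hz !orbT.
  move/(mod_closure_closed Hh); rewrite mem_cat closure_emb => /orP[Hy|/Hab Hy];
    by rewrite in_cons mem_cat Hy ?orbT.
Qed.

Lemma closure_closed f h : h \in closure f -> {subset closure h <= closure f}.
Proof.
elim: f h => [x|g IH|g IHg g' IHg'|i b|i g IH|o i g IH] h.
- by rewrite inE => /eqP-> y.
- rewrite inE => /orP[/eqP-> y //|/IH Hsub y /Hsub Hy].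
  by rewrite inE Hy orbT.
- rewrite inE mem_cat => /orP[/eqP-> y //|/orP[/IHg|/IHg'] Hsub y /Hsub Hy].
  + by rewrite inE mem_cat Hy orbT.
  + by rewrite inE mem_cat Hy !orbT.
- exact: (@closure0_closed (Tri0 i b)).
- rewrite inE => /orP[/eqP-> y //|/IH Hsub y /Hsub Hy].
  by rewrite inE Hy orbT.
- rewrite mem_cat => /orP[/mod_closure_closed //|/IH Hsub y /Hsub Hy].
  by rewrite mem_cat Hy orbT.
Qed.

End Closure.

Section ClosureProperties.
Variables (n : nat) (phi : form n).
Implicit Types (g h : form n) (a : form0 n) (i : agent n).
Local Notation cl := (closure phi).

Lemma closure_Neg g : Neg g \in cl -> g \in cl.
Proof. by move/closure_closed; apply; rewrite inE mem_closure orbT. Qed.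

Lemma closure_And g h : And g h \in cl -> g \in cl /\ h \in cl.
Proof. by move/closure_closed=> H; split; apply: H; rewrite inE mem_cat mem_closure ?orbT. Qed.

Lemma closure_Box i g : Box i g \in cl -> g \in cl.
Proof. by move/closure_closed; apply; rewrite inE mem_closure orbT. Qed.

Lemma closure_Mod o i g : Mod o i g \in cl ->
  g \in cl /\ Box i (Imp g (At (mop_atom o i))) \in cl.
Proof.
by move/closure_closed=> H; split; apply: H; rewrite mem_cat ?mem_closure ?inE ?eqxx ?orbT.
Qed.

Lemma closure_Tri i a : Tri i a \in cl -> emb a \in cl.
Proof.
move/closure_closed; apply; cbn [closure closure0].
by rewrite inE mem_cat -closure_emb mem_closure orbT.
Qed.

Lemma closure_Tri_imod k i a :
  Tri i (Imp0 a (At0 (iatom k i))) \in cl -> Mod (imod k) i (emb a) \in cl.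
Proof.
move/closure_closed; apply.
by rewrite inE mem_cat /incentive_closure dest_incentive_Imp0 mem_head !orbT.
Qed.

End ClosureProperties.

Theorem LCA_complete n (phi : form n) : valid phi -> LCA phi.
Proof.
move=> Hv; apply: NNPP => Hn.
have Hbound g : g \in closure phi -> var_bound g <= \max_(h <- closure phi) var_bound h.
  by move=> Hg; apply: leq_bigmax_seq.
apply: (not_valid_of_not_LCA (@closure_Neg n phi) (@closure_And n phi)
  (@closure_Box n phi) (@closure_Mod n phi) (@closure_Tri n phi) (@closure_Tri_imod n phi)
  Hbound (mem_closure phi) Hn Hv).
Qed.

Theorem theorem2 (n : nat) (phi : form n) : LCA phi <-> valid phi.
Proof. by split; [apply: LCA_sound | apply: LCA_complete]. Qed.
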